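(* Let $d\ge1$ be an integer and let $G$ be a triangle-free graph on $n$ vertices with maximum degree $d$. Then for all $\lambda>0$, writing $w=W(d\log(1+\lambda))$, \[ P_G(\lambda) \;\ge\; \exp\!\left(\left[w^2+2w\right]\frac{n}{2d}\right). \] In particular (taking $\lambda=1$), for every $\varepsilon>0$ there is $d_0$ such that if $d\ge d_0$ then $G$ has at least $\exp\!\left[\left(\frac12-\varepsilon\right)\frac{\log^2 d}{d}n\right]$ independent sets.
   Context: For a graph $G$, $P_G(\lambda)=\sum_{J}\lambda^{|J|}$, the sum over all independent sets $J$ of $G$ (including the empty set), is the hard-core partition function (independence polynomial). For $z>0$, $W(z)$ denotes the unique positive real with $W(z)e^{W(z)}=z$. Logarithms are natural. *)

From mathcomp Require Import all_boot.
From Stdlib Require Import Reals ClassicalEpsilon.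
Set Implicit Arguments. Unset Strict Implicit. Unset Printing Implicit Defensive.

Definition LambertW (z : R) : R :=
  epsilon (inhabits R0) (fun w : R => Rlt 0 w /\ Rmult w (exp w) = z).

Definition simple_graph (n : nat) (adj : rel 'I_n) : Prop :=
  (forall u v, adj u v = adj v u) /\ (forall u, adj u u = false).

Definition triangle_free (n : nat) (adj : rel 'I_n) : Prop :=
  forall u v w, adj u v -> adj v w -> adj u w -> False.

Definition degree (n : nat) (adj : rel 'I_n) (u : 'I_n) : nat :=
  #|[set v | adj u v]|.

Definition max_degree_eq (n : nat) (adj : rel 'I_n) (d : nat) : Prop :=
  (forall u, (degree adj u <= d)%nat) /\ (exists u, degree adj u = d).

Definition independent (n : nat) (adj : rel 'I_n) (J : {set 'I_n}) : bool :=
  [forall u in J, forall v in J, ~~ adj u v].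

Definition PG (n : nat) (adj : rel 'I_n) (lam : R) : R :=
  \big[Rplus/R0]_(J : {set 'I_n} | independent adj J) (pow lam #|J|).

Definition num_indep (n : nat) (adj : rel 'I_n) : nat :=
  #|[set J : {set 'I_n} | independent adj J]|.

From mathcomp Require Import all_boot.
From Stdlib Require Import Reals Lra ClassicalEpsilon.
From mathcomp Require Import Rstruct.
Open Scope R_scope.
Set Implicit Arguments. Unset Strict Implicit.

(* The occupancy method.  Draw J from the hard-core model at fugacity lam, fix
   a vertex v, condition on K = J minus N(v), and let Y be the number of
   neighbours of v with no neighbour in K.  As G is triangle-free, N(v) is
   independent, so J /\ N(v) is a hard-core sample on these Y vertices:
   P(J /\ N(v) = 0) = (1+lam)^-Y >= 1 + w - Y ln(1+lam) and
   E|J /\ N(v)| = Y lam/(1+lam).  Averaging over v, with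
   P(v in J) = lam/(1+lam) P(J /\ N(v) = 0) and sum_v |J /\ N(v)| <= d|J|, the
   choice w e^w = d ln(1+lam) gives E|J| >= n lam/(1+lam) e^-w.  Since
   E|J| = lam P_G'(lam)/P_G(lam), under lam = exp(t e^t/d) - 1 this says that
   P_G(lam) exp(-(t^2+2t) n/(2d)) is nondecreasing in t, and it is 1 at t = 0.
   The asymptotic form follows at lam = 1 from W(d ln 2) >= (1-eps) ln d for
   large d. *)

Lemma Rle_big (I : finType) (P : pred I) (F G : I -> R) :
  (forall i, P i -> F i <= G i) ->
  \big[Rplus/R0]_(i | P i) F i <= \big[Rplus/R0]_(i | P i) G i.
Proof.
move=> FG; apply: (big_ind2 (fun x y => x <= y)) => [|x1 x2 y1 y2 ? ?|i Pi];
  [lra | lra | exact: FG].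
Qed.

Lemma Rle_big_lincomb (I : finType) (P : pred I) (A B C : I -> R) a b c :
  (forall i, P i -> a * A i - b * B i <= c * C i) ->
  a * \big[Rplus/R0]_(i | P i) A i - b * \big[Rplus/R0]_(i | P i) B i
    <= c * \big[Rplus/R0]_(i | P i) C i.
Proof.
move=> ABC.
apply: (big_ind3 (fun x y z => a * x - b * y <= c * z)) => [|? ? ? ? ? ? ? ?|];
  [lra | lra | exact: ABC].
Qed.

Lemma INR_big (I : finType) (P : pred I) (f : I -> nat) :
  INR (\sum_(i | P i) f i) = \big[Rplus/R0]_(i | P i) INR (f i).
Proof. exact: (big_morph INR plus_INR). Qed.

Lemma big_mul_INR_bool (I : finType) (P Q : pred I) (F : I -> R) :
  \big[Rplus/R0]_(i | P i) (F i * INR (Q i)) = \big[Rplus/R0]_(i | P i && Q i) F i.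
Proof.
rewrite (bigID Q) /= [X in _ + X]big1 ?Rplus_0_r.
  by apply: eq_bigr => i /andP[_ ->] /=; ring.
by move=> i /andP[_ /negbTE ->] /=; ring.
Qed.

Lemma big_const_ord_R (m : nat) (x : R) : \big[Rplus/R0]_(i < m) x = INR m * x.
Proof.
rewrite big_const card_ord; elim: m => [|m IH]; first by rewrite /=; ring.
by rewrite iterS IH S_INR; ring.
Qed.

Section SubsetSums.
Variable T : finType.

Lemma big_subset_setD1 (f : {set T} -> R) (A : {set T}) a : a \in A ->
  \big[Rplus/R0]_(S : {set T} | S \subset A) f S =
  \big[Rplus/R0]_(S : {set T} | S \subset A :\ a) f S +
  \big[Rplus/R0]_(S : {set T} | S \subset A :\ a) f (a |: S).
Proof.
move=> Aa; rewrite (bigID (fun S : {set T} => a \in S)) /= Rplus_comm; congr Rplus.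
  by apply: eq_bigl => S; rewrite subsetD1.
rewrite (reindex_onto (fun S => a |: S) (fun S => S :\ a)); last first.
  by move=> S /andP[_ Sa]; rewrite setD1K.
apply: eq_bigl => S; rewrite setU11 andbT subsetD1; apply/idP/idP.
  move=> /andP[SA /eqP SaS]; rewrite -SaS setD11 andbT.
  by apply: subset_trans SA; apply: subsetDl.
by move=> /andP[SA Sa]; rewrite setU1K // eqxx andbT subUset sub1set Aa SA.
Qed.

Lemma set_ind (P : {set T} -> Prop) :
  P set0 -> (forall (A : {set T}) a, a \in A -> P (A :\ a) -> P A) ->
  forall A, P A.
Proof.
move=> P0 PD1 A; move: {2}#|A| (erefl #|A|) => m.
elim: m A => [|m IH] A cardA.
  by move/eqP: cardA; rewrite cards_eq0 => /eqP ->.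
have : A != set0 by rewrite -card_gt0 cardA.
case/set0Pn => a Aa; apply: (PD1 _ _ Aa); apply: IH.
by move: cardA; rewrite (cardsD1 a) Aa => -[].
Qed.

Lemma big_subset_pow (x : R) (A : {set T}) :
  \big[Rplus/R0]_(S : {set T} | S \subset A) x ^ #|S| = (1 + x) ^ #|A|.
Proof.
elim/set_ind: A => [|A a Aa IH].
  by rewrite (big_pred1 set0) ?cards0 // => S; rewrite subset0.
have -> : #|A| = #|A :\ a|.+1 by rewrite (cardsD1 a A) Aa.
rewrite (big_subset_setD1 _ Aa) IH.
rewrite (eq_bigr (fun S : {set T} => x * x ^ #|S|)); last first.
  by move=> S; rewrite subsetD1 cardsU1 => /andP[_ /negbTE ->].
by rewrite -big_distrr IH /=; ring.
Qed.

Lemma big_subset_card_pow (x : R) (A : {set T}) :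
  (1 + x) * \big[Rplus/R0]_(S : {set T} | S \subset A) (INR #|S| * x ^ #|S|) =
  INR #|A| * x * (1 + x) ^ #|A|.
Proof.
elim/set_ind: A => [|A a Aa IH].
  by rewrite (big_pred1 set0) ?cards0 /=; [ring | move=> S; rewrite subset0].
have -> : #|A| = #|A :\ a|.+1 by rewrite (cardsD1 a A) Aa.
rewrite (big_subset_setD1 _ Aa).
have -> : \big[Rplus/R0]_(S : {set T} | S \subset A :\ a) (INR #|a |: S| * x ^ #|a |: S|)
  = \big[Rplus/R0]_(S : {set T} | S \subset A :\ a) (INR #|S| * x ^ #|S| * x + x * x ^ #|S|).
  apply: eq_bigr => S; rewrite subsetD1 cardsU1 => /andP[_ /negbTE ->].
  by rewrite plus_INR pow_add /=; ring.
rewrite big_split -big_distrl -big_distrr big_subset_pow S_INR /=.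
set m := #|A :\ a| in IH *.
set T' := \big[Rplus/R0]_(S : {set T} | S \subset A :\ a) (INR #|S| * x ^ #|S|) in IH *.
transitivity ((1 + x) * ((1 + x) * T') + x * (1 + x) * (1 + x) ^ m); first ring.
by rewrite IH; ring.
Qed.
End SubsetSums.

Lemma disjointP (T : finType) (A B : {set T}) :
  reflect (forall x, x \in A -> x \in B -> False) [disjoint A & B].
Proof.
rewrite disjoint_subset; apply: (iffP subsetP) => AB x Ax.
  by move=> Bx; move: (AB x Ax); rewrite inE Bx.
by rewrite inE; apply/negP; exact: AB x Ax.
Qed.

Lemma setUD_setUI_disjoint (T : finType) (K S N : {set T}) :
  [disjoint K & N] -> S \subset N -> (K :|: S) :\: N = K /\ (K :|: S) :&: N = S.
Proof.
move=> /disjointP KN /subsetP SN; split; apply/setP => x; rewrite !inE;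
  case Kx: (x \in K); case Sx: (x \in S); case Nx: (x \in N) => //=;
  by [exfalso; exact: KN x Kx Nx | move: (SN x Sx); rewrite Nx].
Qed.

Lemma pow_tangent_le_exp (q w : R) (Y : nat) : 0 < q ->
  q ^ Y * (1 + w - INR Y * ln q) <= exp w.
Proof.
move=> q_gt0; rewrite -Rpower_pow // /Rpower.
have -> : exp w = exp (INR Y * ln q) * exp (w - INR Y * ln q)
  by rewrite -exp_plus; congr exp; ring.
apply: Rmult_le_compat_l; first exact: Rlt_le (exp_pos _).
have := exp_ineq1_le (w - INR Y * ln q); lra.
Qed.

Section HardCore.
Variables (n : nat) (adj : rel 'I_n).
Hypothesis adj_sym : forall u v, adj u v = adj v u.
Hypothesis adj_irr : forall u, adj u u = false.
Variable lam : R.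

Definition nbhd (v : 'I_n) : {set 'I_n} := [set u | adj v u].

(* [hc_sum g] is [P_G(lam)] times the expectation of [g J] for [J] drawn from
   the hard-core model at fugacity [lam]. *)
Definition hc_sum (g : {set 'I_n} -> R) : R :=
  \big[Rplus/R0]_(J : {set 'I_n} | independent adj J) (lam ^ #|J| * g J).

Lemma independentP (J : {set 'I_n}) :
  reflect (forall u v, u \in J -> v \in J -> ~~ adj u v) (independent adj J).
Proof.
apply: (iffP idP) => [/forall_inP indJ u v Ju Jv | indJ].
  by move/forall_inP: (indJ u Ju); apply.
by apply/forall_inP => u Ju; apply/forall_inP => v Jv; apply: indJ.
Qed.

Lemma independent_setU1 (v : 'I_n) (J : {set 'I_n}) :
  independent adj (v |: J) = independent adj J && [disjoint J & nbhd v].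
Proof.
apply/idP/andP => [indvJ | [indJ /disjointP disJ]].
  split; first by apply/independentP => x y Jx Jy; apply: (independentP _ indvJ);
    rewrite inE ?Jx ?Jy orbT.
  apply/disjointP => u Ju; rewrite inE => vu.
  by move/independentP: indvJ => /(_ v u (setU11 _ _)); rewrite inE Ju orbT vu => /(_ isT).
have vJ x : x \in J -> ~~ adj v x.
  by move=> Jx; apply/negP => vx; apply: (disJ x Jx); rewrite inE.
apply/independentP => x y; rewrite !inE => /orP[/eqP-> | Jx] /orP[/eqP-> | Jy].
- by rewrite adj_irr.
- exact: vJ.
- by rewrite adj_sym; exact: vJ.
- exact: (independentP _ indJ).
Qed.

Lemma big_hc_sum (g : 'I_n -> {set 'I_n} -> R) :
  \big[Rplus/R0]_(v : 'I_n) hc_sum (g v) =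
  hc_sum (fun J => \big[Rplus/R0]_(v : 'I_n) g v J).
Proof. by rewrite /hc_sum exchange_big /=; apply: eq_bigr => J _; rewrite big_distrr. Qed.

Lemma big_hc_sum_mem :
  \big[Rplus/R0]_(v : 'I_n) hc_sum (fun J => INR (v \in J)) =
  hc_sum (fun J => INR #|J|).
Proof.
rewrite big_hc_sum; apply: eq_bigr => J _; rewrite -INR_big -sum1_card big_mkcond.
by congr (_ * INR _); apply: eq_bigr => u _; case: (u \in J).
Qed.

Lemma hc_sum_mem (v : 'I_n) :
  (1 + lam) * hc_sum (fun J => INR (v \in J)) =
  lam * hc_sum (fun J => INR [disjoint J & nbhd v]).
Proof.
rewrite /hc_sum !big_mul_INR_bool [in RHS](bigID (fun J : {set 'I_n} => v \in J)) /=.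
set X := \big[Rplus/R0]_(J | independent adj J && (v \in J)) lam ^ #|J|.
set Y := \big[Rplus/R0]_(J | independent adj J && [disjoint J & nbhd v] && (v \notin J))
  lam ^ #|J|.
have -> : \big[Rplus/R0]_(J | independent adj J && [disjoint J & nbhd v] && (v \in J))
  lam ^ #|J| = X.
  apply: eq_bigl => J; case vJ: (v \in J); rewrite ?andbT ?andbF //.
  have vJJ : v |: J = J by apply/setUidPr; rewrite sub1set.
  by rewrite -independent_setU1 vJJ.
suff -> : X = lam * Y by ring.
rewrite /X (reindex_onto (fun J => v |: J) (fun J => J :\ v)); last first.
  by move=> J /andP[_ vJ]; rewrite setD1K.
rewrite /Y big_distrr; apply: congr_big => // [J|J /andP[_ /eqP vJ]].
  rewrite setU11 andbT independent_setU1; apply/idP/idP.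
    by move=> /andP[-> /eqP <-]; rewrite setD11 andbT.
  by move=> /andP[-> vJ]; rewrite setU1K // eqxx.
by rewrite cardsU1 -vJ setD11.
Qed.

Lemma big_card_setI_nbhd (J : {set 'I_n}) :
  (\sum_(v : 'I_n) #|J :&: nbhd v| = \sum_(u in J) #|nbhd u|)%nat.
Proof.
rewrite (eq_bigr (fun v => \sum_(u in J) adj v u)) => [|v _].
  rewrite exchange_big /=; apply: eq_bigr => u _; rewrite -sum1_card [RHS]big_mkcond /=.
  by apply: eq_bigr => v _; rewrite inE adj_sym.
rewrite -sum1_card big_mkcond [RHS]big_mkcond /=; apply: eq_bigr => u _.
by rewrite !inE; case: (u \in J); case: (adj v u).
Qed.

Lemma big_hc_sum_card_setI_nbhd (d : nat) :
  (forall u, (#|nbhd u| <= d)%nat) -> 0 <= lam ->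
  \big[Rplus/R0]_(v : 'I_n) hc_sum (fun J => INR #|J :&: nbhd v|) <=
  INR d * \big[Rplus/R0]_(v : 'I_n) hc_sum (fun J => INR (v \in J)).
Proof.
move=> deg_le lam_ge0.
rewrite big_hc_sum big_hc_sum_mem /hc_sum big_distrr; apply: Rle_big => J _.
rewrite -INR_big big_card_setI_nbhd.
have card_le : (\sum_(u in J) #|nbhd u| <= #|J| * d)%nat.
  by rewrite -sum1_card big_distrl /= mul1n; apply: leq_sum => u _; exact: deg_le.
have := le_INR _ _ (elimT leP card_le); have := pow_le _ #|J| lam_ge0.
rewrite mult_INR /=; nra.
Qed.

Section Fiber.
Hypothesis adj_tf : triangle_free adj.
Variable v : 'I_n.

Definition indep_off_nbhd (K : {set 'I_n}) : bool :=
  independent adj K && [disjoint K & nbhd v].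

Definition free_nbhd (K : {set 'I_n}) : {set 'I_n} :=
  [set u in nbhd v | [forall x in K, ~~ adj u x]].

Lemma free_nbhd_sub (K : {set 'I_n}) : free_nbhd K \subset nbhd v.
Proof. by apply/subsetP => u; rewrite inE => /andP[]. Qed.

(* Splitting [J] into [J :\: nbhd v] and [J :&: nbhd v]; triangle-freeness
   makes every set of neighbours of [v] independent. *)
Lemma big_independent_fiber (f : {set 'I_n} -> R) :
  \big[Rplus/R0]_(J : {set 'I_n} | independent adj J) f J =
  \big[Rplus/R0]_(K : {set 'I_n} | indep_off_nbhd K)
     \big[Rplus/R0]_(S : {set 'I_n} | S \subset free_nbhd K) f (K :|: S).
Proof.
rewrite (partition_big (fun J => J :\: nbhd v) indep_off_nbhd); last first.
  move=> J indJ; apply/andP; split.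
    apply/independentP => x y; rewrite !inE => /andP[_ Jx] /andP[_ Jy].
    exact: (independentP _ indJ).
  by apply/disjointP => x; rewrite !inE => /andP[/negbTE ->].
apply: eq_bigr => K /andP[indK disK].
rewrite (reindex_onto (fun S => K :|: S) (fun J => J :&: nbhd v)); last first.
  move=> J /andP[_ /eqP <-]; apply/setP => x; rewrite !inE.
  by case: (x \in J); case: (adj v x).
apply: eq_bigl => S; apply/idP/idP.
  move=> /andP[/andP[indKS _] /eqP <-]; apply/subsetP => u; rewrite !inE.
  move=> /andP[KSu vu]; rewrite vu; apply/forall_inP => x Kx.
  by apply: (independentP _ indKS); rewrite inE ?KSu ?Kx ?orbT.
move=> SF; have SN := subset_trans SF (free_nbhd_sub K); move/subsetP: SF => SF.
have [-> ->] := setUD_setUI_disjoint disK SN; rewrite !eqxx !andbT.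
apply/independentP => x y; rewrite !inE => /orP[Kx | Sx] /orP[Ky | Sy].
- exact: (independentP _ indK).
- by move: (SF y Sy); rewrite inE adj_sym => /andP[_ /forall_inP /(_ x Kx)].
- by move: (SF x Sx); rewrite inE => /andP[_ /forall_inP /(_ y Ky)].
- apply/negP => xy; move/subsetP: SN => SN.
  by move: (SN x Sx) (SN y Sy); rewrite !inE => vx vy; exact: adj_tf vx xy vy.
Qed.

Section FiberSums.
Variable K : {set 'I_n}.
Hypothesis offK : indep_off_nbhd K.

Lemma pow_card_setU_free (S : {set 'I_n}) : S \subset free_nbhd K ->
  lam ^ #|K :|: S| = lam ^ #|K| * lam ^ #|S|.
Proof.
move=> SF; have SN := subset_trans SF (free_nbhd_sub K).
have disKS : [disjoint K & S] by apply: disjointWr SN (proj2 (andP offK)).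
by rewrite -pow_add; have := cardsUI K S; rewrite (disjoint_setI0 disKS) cards0 addn0 => ->.
Qed.

Lemma setUI_nbhd_free (S : {set 'I_n}) : S \subset free_nbhd K ->
  (K :|: S) :&: nbhd v = S.
Proof.
by move=> SF; have [_ ->] := setUD_setUI_disjoint (proj2 (andP offK))
  (subset_trans SF (free_nbhd_sub K)).
Qed.

Lemma big_fiber_one :
  \big[Rplus/R0]_(S : {set 'I_n} | S \subset free_nbhd K) (lam ^ #|K :|: S| * 1)
  = lam ^ #|K| * (1 + lam) ^ #|free_nbhd K|.
Proof.
rewrite -big_subset_pow big_distrr; apply: eq_bigr => S SF.
by rewrite pow_card_setU_free // Rmult_1_r.
Qed.

Lemma big_fiber_card_nbhd :
  (1 + lam) * \big[Rplus/R0]_(S : {set 'I_n} | S \subset free_nbhd K)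
     (lam ^ #|K :|: S| * INR #|(K :|: S) :&: nbhd v|)
  = lam ^ #|K| * (INR #|free_nbhd K| * lam * (1 + lam) ^ #|free_nbhd K|).
Proof.
rewrite -big_subset_card_pow.
have -> : \big[Rplus/R0]_(S : {set 'I_n} | S \subset free_nbhd K)
     (lam ^ #|K :|: S| * INR #|(K :|: S) :&: nbhd v|) =
   lam ^ #|K| * \big[Rplus/R0]_(S : {set 'I_n} | S \subset free_nbhd K)
     (INR #|S| * lam ^ #|S|).
  rewrite big_distrr; apply: eq_bigr => S SF /=.
  by rewrite pow_card_setU_free // setUI_nbhd_free // Rmult_assoc; congr Rmult; apply: Rmult_comm.
ring.
Qed.

Lemma big_fiber_disjoint_nbhd :
  \big[Rplus/R0]_(S : {set 'I_n} | S \subset free_nbhd K)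
     (lam ^ #|K :|: S| * INR [disjoint K :|: S & nbhd v])
  = lam ^ #|K|.
Proof.
have -> : \big[Rplus/R0]_(S : {set 'I_n} | S \subset free_nbhd K)
     (lam ^ #|K :|: S| * INR [disjoint K :|: S & nbhd v]) =
   \big[Rplus/R0]_(S : {set 'I_n} | S \subset free_nbhd K)
     (lam ^ #|K :|: S| * INR (S == set0)).
  by apply: eq_bigr => S SF; rewrite -setI_eq0 setUI_nbhd_free.
rewrite big_mul_INR_bool (big_pred1 set0) ?setU0 // => S.
by rewrite /=; case: eqP => [-> | _]; rewrite ?sub0set ?andbF.
Qed.
End FiberSums.

Lemma hc_sum_nbhd_tangent (w : R) : 0 < lam ->
  (1 + w) * hc_sum (fun _ => 1)
  - ln (1 + lam) * (1 + lam) / lam * hc_sum (fun J => INR #|J :&: nbhd v|)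
  <= exp w * hc_sum (fun J => INR [disjoint J & nbhd v]).
Proof.
move=> lam_gt0; rewrite /hc_sum !big_independent_fiber.
apply: Rle_big_lincomb => K offK.
have := big_fiber_card_nbhd offK.
rewrite big_fiber_one // big_fiber_disjoint_nbhd //.
set C := \big[Rplus/R0]_(S | _) _ => C_eq.
set Y := #|free_nbhd K|.
have -> : C = lam ^ #|K| * (INR Y * lam * (1 + lam) ^ Y) / (1 + lam).
  rewrite -C_eq; field; lra.
have -> : (1 + w) * (lam ^ #|K| * (1 + lam) ^ Y) - ln (1 + lam) * (1 + lam) / lam *
     (lam ^ #|K| * (INR Y * lam * (1 + lam) ^ Y) / (1 + lam))
   = lam ^ #|K| * ((1 + lam) ^ Y * (1 + w - INR Y * ln (1 + lam))) by field; lra.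
rewrite Rmult_comm; apply: Rmult_le_compat_r; first by apply: pow_le; lra.
apply: pow_tangent_le_exp; lra.
Qed.
End Fiber.

Lemma occupancy_lower_bound (d : nat) (w : R) :
  triangle_free adj -> (forall u, (#|nbhd u| <= d)%nat) ->
  0 < lam -> 0 < w -> w * exp w = INR d * ln (1 + lam) ->
  lam / (1 + lam) * exp (- w) * INR n * hc_sum (fun _ => 1)
  <= hc_sum (fun J => INR #|J|).
Proof.
move=> adj_tf deg_le lam_gt0 w_gt0 wW.
set Z := hc_sum (fun _ => 1).
set A := \big[Rplus/R0]_(v : 'I_n) hc_sum (fun J => INR (v \in J)).
set B := \big[Rplus/R0]_(v : 'I_n) hc_sum (fun J => INR [disjoint J & nbhd v]).
set C := \big[Rplus/R0]_(v : 'I_n) hc_sum (fun J => INR #|J :&: nbhd v|).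
set L := ln (1 + lam).
have L_gt0 : 0 < L by rewrite /L -ln_1; apply: ln_increasing; lra.
have tangentC : (1 + w) * (INR n * Z) - L * (1 + lam) / lam * C <= exp w * B.
  rewrite -(big_const_ord_R n Z); apply: Rle_big_lincomb => v _.
  exact: hc_sum_nbhd_tangent.
have C_le : C <= INR d * A by apply: big_hc_sum_card_setI_nbhd => //; lra.
have AB : (1 + lam) * A = lam * B.
  by rewrite /A /B !big_distrr; apply: eq_bigr => v _; exact: hc_sum_mem.
have LC_le : L * (1 + lam) / lam * C <= w * exp w * B.
  have -> : w * exp w * B = L * (1 + lam) / lam * (INR d * A).
    have -> : L * (1 + lam) / lam * (INR d * A) = INR d * L * ((1 + lam) * A) / lam by field; lra.
    by rewrite AB wW -/L; field; lra.
  apply: Rmult_le_compat_l => //.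
  apply: Rlt_le; apply: Rdiv_lt_0_compat => //; apply: Rmult_lt_0_compat; lra.
have nZ_le : INR n * Z <= exp w * B.
  apply: (Rmult_le_reg_l (1 + w)); lra.
rewrite -big_hc_sum_mem -/A (_ : A = lam / (1 + lam) * B); last first.
  by apply: (Rmult_eq_reg_l (1 + lam)); [rewrite AB; field | ]; lra.
rewrite exp_Ropp.
have ew_gt0 := exp_pos w.
have lq_gt0 : 0 < lam / (1 + lam) by apply: Rdiv_lt_0_compat; lra.
have -> : lam / (1 + lam) * B = lam / (1 + lam) * (/ exp w * (exp w * B)) by field; lra.
have -> : lam / (1 + lam) * / exp w * INR n * Z = lam / (1 + lam) * (/ exp w * (INR n * Z))
  by ring.
apply: Rmult_le_compat_l; first lra.
apply: Rmult_le_compat_l => //; exact: Rlt_le (Rinv_0_lt_compat _ ew_gt0).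
Qed.
End HardCore.

Lemma exp_le_exp (x y : R) : x <= y -> exp x <= exp y.
Proof.
by case/Rle_lt_or_eq_dec => [/exp_increasing/Rlt_le | ->] //; apply: Rle_refl.
Qed.

Lemma ln_ge0 (x : R) : 1 <= x -> 0 <= ln x.
Proof.
rewrite -ln_1 => /Rle_lt_or_eq_dec[/(ln_increasing _ _ Rlt_0_1)/Rlt_le | <-] //.
exact: Rle_refl.
Qed.

Lemma LambertW_spec (z : R) :
  0 < z -> 0 < LambertW z /\ LambertW z * exp (LambertW z) = z.
Proof.
move=> z_gt0; rewrite /LambertW.
pose P w := 0 < w /\ w * exp w = z.
suff : P (epsilon (inhabits R0) P) by [].
apply: epsilon_spec.
have cont : continuity (fun x => x * exp x - z) by reg.
have ez : 1 + z < exp z by apply: exp_ineq1; lra.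
have [x [[x_ge0 x_le] fx]] := IVT (fun x => x * exp x - z) 0 z cont z_gt0
  ltac:(cbv beta; lra) ltac:(cbv beta; nra).
exists x; split; last lra.
case: (Rle_lt_or_eq_dec 0 x x_ge0) => // x0.
by rewrite -x0 Rmult_0_l in fx; lra.
Qed.

Lemma LambertW_ge (z t : R) : 0 < z -> 0 <= t -> t * exp t <= z -> t <= LambertW z.
Proof.
move=> z_gt0 t_ge0 tz; have [W_gt0 WW] := LambertW_spec z_gt0.
case: (Rle_lt_dec t (LambertW z)) => // W_lt_t; exfalso.
have := exp_increasing _ _ W_lt_t; have := exp_pos (LambertW z); nra.
Qed.

Lemma derivable_pt_lim_big (I : finType) (P : pred I) (f f' : I -> R -> R) (y : R) :
  (forall i, derivable_pt_lim (f i) y (f' i y)) ->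
  derivable_pt_lim (fun x => \big[Rplus/R0]_(i | P i) f i x) y
                   (\big[Rplus/R0]_(i | P i) f' i y).
Proof.
move=> df; rewrite unlock; elim: (index_enum I) => [|i r IH] /=.
  exact: derivable_pt_lim_const.
case: (P i) => //; exact: derivable_pt_lim_plus (df i) IH.
Qed.

Section PartitionFunction.
Variables (n : nat) (adj : rel 'I_n).

Definition PG_deriv (y : R) : R :=
  \big[Rplus/R0]_(J : {set 'I_n} | independent adj J) (INR #|J| * y ^ Nat.pred #|J|).

Lemma derivable_pt_lim_PG (y : R) : derivable_pt_lim (PG adj) y (PG_deriv y).
Proof.
apply: (@derivable_pt_lim_big _ (fun J => independent adj J) (fun J x => x ^ #|J|)
  (fun J x => INR #|J| * x ^ Nat.pred #|J|)) => J.
exact: derivable_pt_lim_pow.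
Qed.

Lemma PG_deriv_mul (y : R) : y * PG_deriv y = hc_sum adj y (fun J => INR #|J|).
Proof.
rewrite /PG_deriv big_distrr; apply: eq_bigr => J _ /=.
by case: #|J| => [|k] /=; ring.
Qed.

Lemma hc_sum1 (y : R) : hc_sum adj y (fun _ => 1) = PG adj y.
Proof. by apply: eq_bigr => J _; rewrite Rmult_1_r. Qed.

Lemma PG0 : PG adj 0 = 1.
Proof.
have ind0 : independent adj set0 by apply/independentP => u v; rewrite inE.
rewrite /PG (bigD1 set0) // cards0 big1 /= => [|J /andP[_ J0]]; first ring.
by apply: pow_i; apply/ltP; rewrite card_gt0.
Qed.

Lemma PG1 : PG adj 1 = INR (num_indep adj).
Proof.
rewrite /PG /num_indep (eq_bigr (fun _ => INR 1)) => [|J _]; last by rewrite pow1.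
by rewrite -INR_big -sum1_card; congr INR; apply: eq_bigl => J; rewrite inE.
Qed.
End PartitionFunction.

Section Reparametrization.
Variables (n : nat) (adj : rel 'I_n) (d : nat).
Hypothesis adj_sym : forall u v, adj u v = adj v u.
Hypothesis adj_irr : forall u, adj u u = false.
Hypothesis adj_tf : triangle_free adj.
Hypothesis deg_le : forall u, (#|nbhd adj u| <= d)%nat.
Hypothesis d_ge1 : 1 <= INR d.

(* The fugacity whose Lambert W parameter [W (d * ln (1 + lam))] is [t]. *)
Definition fugacity (t : R) : R := exp (t * exp t / INR d) - 1.

Definition bound_exponent (t : R) : R := (t ^ 2 + 2 * t) * (INR n / (2 * INR d)).

Definition PG_ratio (t : R) : R := PG adj (fugacity t) * exp (- bound_exponent t).

Definition PG_ratio_deriv (t : R) : R :=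
  (1 + t) / INR d * exp (- bound_exponent t) *
  (PG_deriv adj (fugacity t) * (1 + fugacity t) * exp t - INR n * PG adj (fugacity t)).

Lemma derivable_pt_lim_fugacity (t : R) :
  derivable_pt_lim fugacity t ((1 + t) * exp t / INR d * (1 + fugacity t)).
Proof.
have dg := derivable_pt_lim_mult _ _ t _ _
  (derivable_pt_lim_mult _ _ t _ _ (derivable_pt_lim_id t) (derivable_pt_lim_exp t))
  (derivable_pt_lim_const (/ INR d) t).
have de := derivable_pt_lim_comp _ exp _ _ _ dg (derivable_pt_lim_exp _).
apply: (eq_ind _ _ (derivable_pt_lim_minus _ _ _ _ _ de (derivable_pt_lim_const 1 t))).
by rewrite /fugacity /id /mult_fct /fct_cte /Rdiv /=; field; lra.
Qed.

Lemma derivable_pt_lim_bound_exponent (t : R) :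
  derivable_pt_lim bound_exponent t ((1 + t) * INR n / INR d).
Proof.
have dp := derivable_pt_lim_plus _ _ t _ _ (derivable_pt_lim_pow t 2)
  (derivable_pt_lim_scal _ 2 t _ (derivable_pt_lim_id t)).
apply: (eq_ind _ _ (derivable_pt_lim_mult _ _ t _ _ dp
  (derivable_pt_lim_const (INR n / (2 * INR d)) t))).
rewrite /fct_cte /=; field; lra.
Qed.

Lemma derivable_pt_lim_PG_ratio (t : R) : derivable_pt_lim PG_ratio t (PG_ratio_deriv t).
Proof.
have dPG := derivable_pt_lim_comp _ _ _ _ _ (derivable_pt_lim_fugacity t)
  (derivable_pt_lim_PG adj (fugacity t)).
have dE := derivable_pt_lim_comp _ exp _ _ _
  (derivable_pt_lim_opp _ _ _ (derivable_pt_lim_bound_exponent t)) (derivable_pt_lim_exp _).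
apply: (eq_ind _ _ (derivable_pt_lim_mult _ _ t _ _ dPG dE)).
rewrite /PG_ratio_deriv /comp /opp_fct /=; field; lra.
Qed.

Lemma PG_ratio_deriv_ge0 (t : R) : 0 < t -> 0 <= PG_ratio_deriv t.
Proof.
move=> t_gt0; set lam := fugacity t.
have g_gt0 : 0 < t * exp t / INR d.
  by apply: Rdiv_lt_0_compat; [apply: Rmult_lt_0_compat; [|apply: exp_pos] |]; lra.
have lam1 : 1 + lam = exp (t * exp t / INR d) by rewrite /lam /fugacity; ring.
have lam_gt0 : 0 < lam.
  by have := exp_ineq1 _ (Rgt_not_eq _ _ g_gt0); rewrite -lam1; lra.
have tW : t * exp t = INR d * ln (1 + lam) by rewrite lam1 ln_exp; field; lra.
have := occupancy_lower_bound adj_sym adj_irr adj_tf deg_le lam_gt0 t_gt0 tW.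
rewrite -PG_deriv_mul hc_sum1 exp_Ropp => occ.
have et_gt0 := exp_pos t.
have nPG_le : INR n * PG adj lam <= PG_deriv adj lam * (1 + lam) * exp t.
  apply: (Rmult_le_reg_l (lam / (1 + lam) * / exp t)).
    by apply: Rmult_lt_0_compat; [apply: Rdiv_lt_0_compat | apply: Rinv_0_lt_compat]; lra.
  have -> : lam / (1 + lam) * / exp t * (PG_deriv adj lam * (1 + lam) * exp t) =
            lam * PG_deriv adj lam by field; lra.
  by rewrite -!Rmult_assoc.
rewrite /PG_ratio_deriv -/lam; apply: Rmult_le_pos; last lra.
apply: Rmult_le_pos; last exact: Rlt_le (exp_pos _).
apply: Rlt_le; apply: Rdiv_lt_0_compat; lra.
Qed.

Lemma PG_ratio_ge1 (t : R) : 0 < t -> 1 <= PG_ratio t.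
Proof.
move=> t_gt0.
have [c [mvt [c_gt0 _]]] := MVT_cor2 PG_ratio PG_ratio_deriv 0 t t_gt0
  (fun c _ => derivable_pt_lim_PG_ratio c).
have PG_ratio0 : PG_ratio 0 = 1.
  rewrite /PG_ratio /fugacity /bound_exponent /= !Rmult_0_l /Rdiv Rmult_0_l exp_0.
  by rewrite Rminus_diag PG0 Rmult_0_r Rplus_0_l Rmult_0_l Ropp_0 exp_0 Rmult_1_r.
have := PG_ratio_deriv_ge0 c_gt0; nra.
Qed.

Lemma PG_fugacity_ge (t : R) : 0 < t -> exp (bound_exponent t) <= PG adj (fugacity t).
Proof.
move=> t_gt0; have := PG_ratio_ge1 t_gt0; rewrite /PG_ratio exp_Ropp.
set P := PG adj _; set E := exp _ => ge1; have E_gt0 : 0 < E by apply: exp_pos.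
have -> : P = P * / E * E by field; lra.
nra.
Qed.
End Reparametrization.

Lemma PG_lower_bound (d n : nat) (adj : rel 'I_n) :
  (1 <= d)%nat -> simple_graph adj -> triangle_free adj -> max_degree_eq adj d ->
  forall lam : R, 0 < lam ->
    let w := LambertW (INR d * ln (1 + lam)) in
    exp ((w ^ 2 + 2 * w) * (INR n / (2 * INR d))) <= PG adj lam.
Proof.
move=> /leP d_ge1 [adj_sym adj_irr] adj_tf [deg_le _] lam lam_gt0 w.
have {}d_ge1 : 1 <= INR d by apply: (le_INR 1).
have ln_gt0 : 0 < ln (1 + lam) by rewrite -ln_1; apply: ln_increasing; lra.
have [w_gt0 wW] := LambertW_spec (Rmult_lt_0_compat _ _ (Rlt_le_trans _ _ _ Rlt_0_1 d_ge1) ln_gt0).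
have fugacity_W : fugacity d w = lam.
  rewrite /fugacity -/w wW (_ : INR d * ln (1 + lam) / INR d = ln (1 + lam)).
    by rewrite exp_ln; lra.
  by field; lra.
by have := PG_fugacity_ge adj_sym adj_irr adj_tf deg_le d_ge1 w_gt0; rewrite fugacity_W.
Qed.

Lemma linear_le_exp (a b l : R) : 0 < b -> 0 <= l -> 4 * a / b ^ 2 <= l ->
  a * l <= exp (b * l).
Proof.
move=> b_gt0 l_ge0 l_large.
have half : b * l / 2 <= exp (b * l / 2) by have := exp_ineq1_le (b * l / 2); lra.
have -> : exp (b * l) = exp (b * l / 2) * exp (b * l / 2)
  by rewrite -exp_plus; congr exp; field.
have sq : (b * l / 2) * (b * l / 2) <= exp (b * l / 2) * exp (b * l / 2).
  by apply: Rmult_le_compat; nra.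
have : a <= b ^ 2 * l / 4.
  have b2 : 0 < b ^ 2 by apply: pow_lt.
  have b24 : 0 <= b ^ 2 / 4 by apply: Rlt_le; apply: Rdiv_lt_0_compat; lra.
  have := Rmult_le_compat_l _ _ _ b24 l_large.
  have -> : b ^ 2 / 4 * (4 * a / b ^ 2) = a by field; lra.
  lra.
move=> a_le; apply: Rle_trans sq; simpl in a_le; nra.
Qed.

Lemma LambertW_ge_log (c k : R) : 0 < c < 1 -> 0 < k ->
  exists d0 : nat, forall d : nat, (d0 <= d)%nat ->
    c * ln (INR d) <= LambertW (INR d * k).
Proof.
move=> [c_gt0 c_lt1] k_gt0; set L := 4 * (c / k) / (1 - c) ^ 2.
have [d0 d0_large] := INR_unbounded (exp (Rabs L)).
exists d0 => d /leP /le_INR d_ge_d0.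
have eL_ge1 : 1 <= exp (Rabs L) by have := exp_ineq1_le (Rabs L); have := Rabs_pos L; lra.
have d_gt0 : 0 < INR d by lra.
set l := ln (INR d).
have dl : INR d = exp l by rewrite /l exp_ln.
have l_large : Rabs L < l by rewrite /l -(ln_exp (Rabs L)); apply: ln_increasing; lra.
have l_ge0 : 0 <= l by have := Rabs_pos L; lra.
have cl_le : c * l <= k * exp ((1 - c) * l).
  have L_le : L <= l by have := Rle_abs L; lra.
  have := @linear_le_exp (c / k) (1 - c) l ltac:(lra) l_ge0 L_le.
  have -> : c * l = k * (c / k * l) by field; lra.
  by move=> H; apply: Rmult_le_compat_l; lra.
apply: LambertW_ge; [by apply: Rmult_lt_0_compat | by apply: Rmult_le_pos; lra |].
rewrite dl (_ : exp l = exp ((1 - c) * l) * exp (c * l)); last by rewrite -exp_plus; congr exp; ring.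
have := exp_pos (c * l); nra.
Qed.

Lemma LambertW_ln2_sq_ge (eps : R) : 0 < eps ->
  exists d0 : nat, forall d : nat, (d0 <= d)%nat -> (1 <= d)%nat ->
    (1 - 2 * eps) * ln (INR d) ^ 2 <=
    LambertW (INR d * ln 2) ^ 2 + 2 * LambertW (INR d * ln 2).
Proof.
move=> eps_gt0; have ln2_gt0 : 0 < ln 2 by have := ln_lt_2; lra.
have W_gt0 d : (1 <= d)%nat -> 0 < LambertW (INR d * ln 2).
  move=> /leP /(le_INR 1) /= d_ge1; apply: (proj1 (LambertW_spec _)); nra.
case: (Rlt_le_dec eps (1 / 2)) => [eps_small | eps_large]; last first.
  exists 0%nat => d _ d_ge1; have := W_gt0 d d_ge1; have := pow2_ge_0 (ln (INR d)).
  simpl; nra.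
have [d0 d0_large] := @LambertW_ge_log (1 - eps) (ln 2) ltac:(lra) ln2_gt0.
exists d0 => d d_ge_d0 d_ge1; have := d0_large d d_ge_d0; have := W_gt0 d d_ge1.
have : 0 <= ln (INR d) by apply: ln_ge0; apply: (le_INR 1); apply/leP.
set l := ln (INR d); set W := LambertW _ => l_ge0 W_gt0' lW.
have : (1 - eps) * l * ((1 - eps) * l) <= W * W by apply: Rmult_le_compat; nra.
simpl; nra.
Qed.

Lemma num_indep_lower_bound (eps : R) : 0 < eps ->
  exists d0 : nat, forall (d n : nat) (adj : rel 'I_n),
    (d0 <= d)%nat -> (1 <= d)%nat ->
    simple_graph adj -> triangle_free adj -> max_degree_eq adj d ->
    exp ((1/2 - eps) * (ln (INR d) ^ 2 / INR d) * INR n) <= INR (num_indep adj).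
Proof.
move=> eps_gt0; have [d0 d0_large] := LambertW_ln2_sq_ge eps_gt0.
exists d0 => d n adj d_ge_d0 d_ge1 adj_simple adj_tf adj_deg.
have := PG_lower_bound d_ge1 adj_simple adj_tf adj_deg Rlt_0_1.
rewrite PG1 /= (_ : 1 + 1 = 2); last ring.
apply: Rle_trans; apply: exp_le_exp.
have d_gt0 : 0 < INR d by apply: (lt_INR 0); apply/leP.
have -> : (1 / 2 - eps) * (ln (INR d) ^ 2 / INR d) * INR n =
          INR n / (2 * INR d) * ((1 - 2 * eps) * ln (INR d) ^ 2) by field; lra.
rewrite (Rmult_comm (_ ^ 2 + _)); apply: Rmult_le_compat_l; last exact: d0_large.
by apply: Rmult_le_pos; [exact: pos_INR | apply: Rlt_le; apply: Rinv_0_lt_compat; lra].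
Qed.

Theorem theorem1p5 :
  (forall (d n : nat) (adj : rel 'I_n),
     (1 <= d)%nat -> simple_graph adj -> triangle_free adj -> max_degree_eq adj d ->
     forall lam : R, 0 < lam ->
       let w := LambertW (INR d * ln (1 + lam)) in
       exp ((w ^ 2 + 2 * w) * (INR n / (2 * INR d))) <= PG adj lam)
  /\
  (forall eps : R, 0 < eps ->
     exists d0 : nat, forall (d n : nat) (adj : rel 'I_n),
       (d0 <= d)%nat -> (1 <= d)%nat ->
       simple_graph adj -> triangle_free adj -> max_degree_eq adj d ->
       exp ((1/2 - eps) * (ln (INR d) ^ 2 / INR d) * INR n)
          <= INR (num_indep adj)).
Proof. by split; [exact: PG_lower_bound | exact: num_indep_lower_bound]. Qed.
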